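(* Fix an integer $t\ge 1$ and let $(\rho,y)$ be the principal eigenpair of the $t$-pleated bowtie $B_t$. Then the set of vertices of spectral rank 1 in $B_t$ (i.e. the vertices $v$ at which $y_v$ attains its maximum) is exactly $\{r_1,r_2\}$ if and only if \[ t<\rho\sqrt{\rho-1}-1 . \]
   Context: For a connected $k$-uniform hypergraph $H=([n],E)$ and $x\in\mathbb{R}^n$, write $x^e=\prod_{v\in e}x_v$ and $F_H(x)=k\sum_{e\in E}x^e$. The principal eigenpair $(\rho,y)$ of $H$ is the unique pair with $y$ strictly positive, $\|y\|_k=1$, satisfying $\rho\, y_i^{k-1}=\sum_{e\in E,\, i\in e} y^{e\setminus\{i\}}$ for all $i$; equivalently $\rho=\max_{\|z\|_k^k=1}F_H(z)$ with $y$ the unique positive maximizer. The $t$-pleated bowtie $B_t$ is the $3$-uniform hypergraph on the $2t+5$ vertices $c,\ell_1,\dots,\ell_{t+2},r_1,\dots,r_{t+2}$ with edge set \[ \{\{c,r_1,r_2\}\}\cup\{\{c,\ell_1,\ell_j\}: 2\le j\le t+2\}\cup\{\{r_1,r_2,r_j\}: 3\le j\le t+2\}, \] so $\{c,\ell_1\}$ lies in $t+1$ edges and $\{r_1,r_2\}$ lies in $t+1$ edges. The spectral rank of a vertex is its position when vertices are ordered by decreasing value of the principal eigenvector (tied vertices share a rank); spectral rank 1 vertices are those with the largest entry. *)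

From HB Require Import structures.
From mathcomp Require Import all_boot all_order all_algebra.
From mathcomp Require Import reals.
Set Implicit Arguments. Unset Strict Implicit. Unset Printing Implicit Defensive.
Import Order.TTheory GRing.Theory Num.Theory.
Local Open Scope ring_scope.

(* A k-uniform hypergraph on a finite vertex type V is given by its edge set
   E : {set {set V}} (each edge a k-element set).  For x : V -> R,
   x^e = \prod_(v in e) x v. *)

(* For a connected hypergraph this pair is unique. *)
Definition principal_eigenpair (R : realType) (V : finType) (k : nat)
  (E : {set {set V}}) (rho : R) (y : V -> R) : Prop :=
  [/\ forall v, 0 < y v,
      \sum_(v : V) y v ^+ k = 1 &
      forall i : V, rho * y i ^+ k.-1 =
        \sum_(e in E | i \in e) \prod_(v in e | v != i) y v].

(* Vertices of the t-pleated bowtie B_t: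
   c = None, l_j = Some (inl (j-1)), r_j = Some (inr (j-1)) for 1 <= j <= t+2
   (indices are 0-based ordinals of 'I_(t+2)). *)
Definition bowtie_vertex (t : nat) : finType := option ('I_t.+2 + 'I_t.+2)%type.

Definition bc (t : nat) : bowtie_vertex t := None.
Definition bl (t : nat) (j : 'I_t.+2) : bowtie_vertex t := Some (inl j).
Definition br (t : nat) (j : 'I_t.+2) : bowtie_vertex t := Some (inr j).

(* Edge set:  {c,r1,r2} ∪ {{c,l1,lj} : 2<=j<=t+2} ∪ {{r1,r2,rj} : 3<=j<=t+2}
   (with 0-based indices: l1 = bl ord0, r1 = br ord0, r2 = br (inord 1)). *)
Definition bowtie_edges (t : nat) : {set {set bowtie_vertex t}} :=
  [set [set bc t; br ord0; br (inord 1)]]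
  :|: [set [set bc t; bl ord0; bl j] | j : 'I_t.+2 & (0 < val j)%N]
  :|: [set [set br ord0; br (inord 1); br j] | j : 'I_t.+2 & (1 < val j)%N].

Definition spectral_rank1 (V : finType) (R : realType) (y : V -> R) : {set V} :=
  [set v | [forall w, y w <= y v]].

From HB Require Import structures.
From mathcomp Require Import all_boot all_order all_algebra.
From mathcomp Require Import reals.
From mathcomp Require Import ring.
Import Order.TTheory GRing.Theory Num.Theory.
Local Open Scope ring_scope.

(* The eigenvector is constant on each pleat: all l_j (j >= 2) share a value m,
   and r_1, r_2 share a value r, because their eigen-equations coincide
   (resp. differ by a positive multiple of r_1 - r_2).  With c = y_c and
   a = y_{l_1}, the equations at l_j, c and l_1 read
     rho m^2 = c a,   rho c^2 = r^2 + (t+1) a m,   rho a^2 = (t+1) c m,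
   whence rho^2 r^2 = c^2 (rho^3 - (t+1)^2) and rho^3 a^3 = (t+1)^2 c^3.
   So c < r exactly when (t+1)^2 < rho^2 (rho - 1), and then also a < c and
   rho > 1; as rho y_v^2 is a product of two values at most r for every other
   pleat vertex v, these are all smaller than r. *)

Lemma sumr_const_ord_gt0 (R : nmodType) n (x : R) :
  \sum_(j < n.+1 | (0 < j)%N) x = x *+ n.
Proof.
rewrite big_mkcond big_ord_recl /= add0r.
by rewrite (eq_bigr (fun=> x)) // sumr_const card_ord.
Qed.

Lemma ltr_mul_sqrt (R : rcfType) (u rho w : R) : 0 < u -> 0 <= rho ->
  (u < rho * Num.sqrt w) = (u ^+ 2 < rho ^+ 2 * w).
Proof.
move=> u_gt0 rho_ge0; have [w_le0 | w_gt0] := lerP w 0.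
  rewrite ler0_sqrtr // mulr0 ltNge (ltW u_gt0); apply/esym/negbTE; rewrite -leNgt.
  exact: le_trans (mulr_ge0_le0 (sqr_ge0 rho) w_le0) (sqr_ge0 u).
rewrite -(ltr_pXn2r (_ : 0 < 2)%N) ?nnegrE ?(ltW u_gt0) ?mulr_ge0 ?sqrtr_ge0 //.
by rewrite exprMn sqr_sqrtr // ltW.
Qed.

Lemma ltr_of_scaled_sqr (R : numDomainType) (rho x z : R) :
  1 < rho -> 0 < x -> 0 <= z -> rho * x ^+ 2 <= z ^+ 2 -> x < z.
Proof.
move=> rho_gt1 x_gt0 z_ge0 le_xz.
rewrite -(ltr_pXn2r (_ : 0 < 2)%N) ?nnegrE ?(ltW x_gt0) //.
by apply: lt_le_trans le_xz; rewrite ltr_pMl // exprn_gt0.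
Qed.

Lemma spectral_rank1_eq_set2 {V : finType} {R : realType} {y : V -> R} {u v : V} :
  y u = y v ->
  spectral_rank1 y = [set u; v] <-> (forall w, w != u -> w != v -> y w < y u).
Proof.
move=> yuv; split=> [rank1 w wu wv | max_uv].
  have : u \in spectral_rank1 y by rewrite rank1 !inE eqxx.
  have : w \notin spectral_rank1 y by rewrite rank1 !inE negb_or wu wv.
  rewrite !inE negb_forall => /existsP[w' ltw'] /forallP/(_ w').
  by apply: lt_le_trans; rewrite ltNge.
have max_u w : y w <= y u.
  have [->|wu] := eqVneq w u; first exact: lexx.
  have [->|wv] := eqVneq w v; first by rewrite yuv.
  exact/ltW/max_uv.
apply/setP => w; rewrite !inE; apply/forallP/idP => [max_w | ].
  by apply: contraTT (max_w u) => /norP[wu wv]; rewrite -ltNge max_uv.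
by case/orP => /eqP-> x; rewrite ?max_u // -yuv max_u.
Qed.

Lemma prod_set3_neq (R : comNzSemiRingType) (T : finType) (a b c i : T) (F : T -> R) :
  a != b -> a != c -> b != c ->
  \prod_(v in [set a; b; c] | v != i) F v =
  (if a != i then F a else 1) * (if b != i then F b else 1) * (if c != i then F c else 1).
Proof.
move=> ab ac bc; rewrite big_mkcondr -setUA big_setU1 /=; last by rewrite !inE negb_or ab ac.
by rewrite big_setU1 /= ?inE // big_set1 mulrA.
Qed.

Section BowtieReducedSystem.
Context {R : realFieldType} {rho c a m r T : R}.
Hypotheses (rho_gt0 : 0 < rho) (c_gt0 : 0 < c) (a_gt0 : 0 < a) (m_gt0 : 0 < m).
Hypothesis eq_m : rho * m ^+ 2 = c * a.
Hypothesis eq_c : rho * c ^+ 2 = r ^+ 2 + a * m * (T + 1).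
Hypothesis eq_a : rho * a ^+ 2 = c * m * (T + 1).

Lemma reduced_am : rho ^+ 2 * (a * m) = (T + 1) * c ^+ 2.
Proof.
apply: (mulIf (lt0r_neq0 (mulr_gt0 a_gt0 m_gt0))).
have -> : rho ^+ 2 * (a * m) * (a * m) = (rho * m ^+ 2) * (rho * a ^+ 2) by ring.
by rewrite eq_m eq_a; ring.
Qed.

Lemma reduced_r_sqr : rho ^+ 2 * r ^+ 2 = c ^+ 2 * (rho ^+ 3 - (T + 1) ^+ 2).
Proof.
have -> : r ^+ 2 = rho * c ^+ 2 - a * m * (T + 1) by rewrite eq_c; ring.
have -> : rho ^+ 2 * (rho * c ^+ 2 - a * m * (T + 1)) =
    rho ^+ 3 * c ^+ 2 - (T + 1) * (rho ^+ 2 * (a * m)) by ring.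
by rewrite reduced_am; ring.
Qed.

Lemma reduced_a_cube : rho ^+ 3 * a ^+ 3 = (T + 1) ^+ 2 * c ^+ 3.
Proof.
have -> : rho ^+ 3 * a ^+ 3 = rho ^+ 2 * a * (rho * a ^+ 2) by ring.
have -> : rho ^+ 2 * a * (rho * a ^+ 2) = c * (T + 1) * (rho ^+ 2 * (a * m)) by rewrite eq_a; ring.
by rewrite reduced_am; ring.
Qed.

Lemma reduced_c_lt_r : 0 <= r -> (c < r) = ((T + 1) ^+ 2 < rho ^+ 2 * (rho - 1)).
Proof.
move=> r_ge0; rewrite -(ltr_pXn2r (_ : 0 < 2)%N) ?nnegrE ?(ltW c_gt0) //.
rewrite -(ltr_pM2l (exprn_gt0 2 rho_gt0)) reduced_r_sqr mulrC ltr_pM2l ?exprn_gt0 //.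
by rewrite mulrBr mulr1 -exprSr !ltrBrDr addrC.
Qed.

Lemma reduced_a_lt_c : (a < c) = ((T + 1) ^+ 2 < rho ^+ 3).
Proof.
rewrite -(ltr_pXn2r (_ : 0 < 3)%N) ?nnegrE ?(ltW a_gt0) ?(ltW c_gt0) //.
by rewrite -(ltr_pM2l (exprn_gt0 3 rho_gt0)) reduced_a_cube ltr_pM2r ?exprn_gt0.
Qed.

End BowtieReducedSystem.

Section BowtieEdges.
Variable t : nat.
Local Notation V := (bowtie_vertex t).
Local Notation o1 := (inord 1 : 'I_t.+2).

Definition edge_c : {set V} := [set bc t; br ord0; br o1].
Definition edge_l (j : 'I_t.+2) : {set V} := [set bc t; bl ord0; bl j].
Definition edge_r (j : 'I_t.+2) : {set V} := [set br ord0; br o1; br j].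

Lemma bl_eq j k : (bl j == bl k :> V) = (j == k). Proof. by apply/eqP/eqP => [[]|->]. Qed.
Lemma br_eq j k : (br j == br k :> V) = (j == k). Proof. by apply/eqP/eqP => [[]|->]. Qed.
Lemma bl_br_eq j k : (bl j == br k :> V) = false. Proof. by []. Qed.
Lemma br_bl_eq j k : (br j == bl k :> V) = false. Proof. by []. Qed.
Lemma bl_bc_eq j : (bl j == bc t :> V) = false. Proof. by []. Qed.
Lemma br_bc_eq j : (br j == bc t :> V) = false. Proof. by []. Qed.
Lemma bc_bl_eq j : (bc t == bl j :> V) = false. Proof. by []. Qed.
Lemma bc_br_eq j : (bc t == br j :> V) = false. Proof. by []. Qed.
Definition bowtie_vertex_eqE :=
  (bl_eq, br_eq, bl_br_eq, br_bl_eq, bl_bc_eq, br_bc_eq, bc_bl_eq, bc_br_eq, eqxx).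

Lemma ord1_gt0 : (0 < o1)%N. Proof. by rewrite inordK. Qed.

Lemma ord1_neq0 : (o1 == ord0) = false.
Proof. by rewrite -val_eqE /= inordK. Qed.

Lemma ord_gt0_neq0 (j : 'I_t.+2) : (0 < j)%N -> (j == ord0) = false.
Proof. by rewrite -val_eqE lt0n => /negbTE. Qed.

Lemma ord_gt1_neq1 (j : 'I_t.+2) : (1 < j)%N -> (j == o1) = false.
Proof. by rewrite -val_eqE /= inordK // => /gtn_eqF. Qed.

Lemma sum_bowtie_link (R : nmodType) i (F : {set V} -> R) :
  \sum_(e in bowtie_edges t | i \in e) F e =
    (if i \in edge_c then F edge_c else 0)
  + \sum_(j < t.+2 | (0 < j)%N) (if i \in edge_l j then F (edge_l j) else 0)
  + \sum_(j < t.+2 | (1 < j)%N) (if i \in edge_r j then F (edge_r j) else 0).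
Proof.
have sumU (A B : {set {set V}}) (G : {set V} -> R) : [disjoint A & B] ->
    \sum_(e in A :|: B) G e = \sum_(e in A) G e + \sum_(e in B) G e.
  by move=> AB; rewrite -bigU //; apply: eq_bigl => e; rewrite !inE.
rewrite big_mkcondr sumU; last first.
  rewrite -setI_eq0; apply/eqP/setP => e; rewrite !inE.
  apply/negP => /andP[/orP[/eqP-> | /imsetP[j _ ->]] /imsetP[k _ /setP/(_ (bc t))]];
    by rewrite !inE !bowtie_vertex_eqE.
rewrite sumU; last first.
  rewrite -setI_eq0; apply/eqP/setP => e; rewrite !inE.
  apply/negP => /andP[/eqP-> /imsetP[k _ /setP/(_ (br ord0))]].
  by rewrite !inE !bowtie_vertex_eqE.
rewrite big_set1 !big_imset; first by rewrite !big_set.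
- move=> j k; rewrite !inE => j_gt1 _ /setP/(_ (br j)).
  have j_gt0 := ltnW j_gt1.
  by rewrite !inE !bowtie_vertex_eqE ord_gt0_neq0 // ord_gt1_neq1 // => /esym/eqP.
- move=> j k; rewrite !inE => j_gt0 _ /setP/(_ (bl j)).
  by rewrite !inE !bowtie_vertex_eqE ord_gt0_neq0 // => /esym/eqP.
Qed.

Lemma prod_edge_c (R : comNzSemiRingType) (F : V -> R) i :
  \prod_(v in edge_c | v != i) F v =
  (if bc t != i then F (bc t) else 1) * (if br ord0 != i then F (br ord0) else 1) *
  (if br o1 != i then F (br o1) else 1).
Proof. by rewrite prod_set3_neq // !bowtie_vertex_eqE eq_sym ord1_neq0. Qed.

Lemma prod_edge_l (R : comNzSemiRingType) (F : V -> R) i (j : 'I_t.+2) : (0 < j)%N ->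
  \prod_(v in edge_l j | v != i) F v =
  (if bc t != i then F (bc t) else 1) * (if bl ord0 != i then F (bl ord0) else 1) *
  (if bl j != i then F (bl j) else 1).
Proof. by move=> j_gt0; rewrite prod_set3_neq // !bowtie_vertex_eqE eq_sym ord_gt0_neq0. Qed.

Lemma prod_edge_r (R : comNzSemiRingType) (F : V -> R) i (j : 'I_t.+2) : (1 < j)%N ->
  \prod_(v in edge_r j | v != i) F v =
  (if br ord0 != i then F (br ord0) else 1) * (if br o1 != i then F (br o1) else 1) *
  (if br j != i then F (br j) else 1).
Proof.
move=> j_gt1; have j_gt0 := ltnW j_gt1.
by rewrite prod_set3_neq // !bowtie_vertex_eqE;
  rewrite eq_sym ?ord1_neq0 ?ord_gt0_neq0 ?ord_gt1_neq1.
Qed.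

Section EigenEquations.
Context {R : realType} {rho : R} {y : V -> R}.
Hypothesis eigen : forall i, rho * y i ^+ 2 =
  \sum_(e in bowtie_edges t | i \in e) \prod_(v in e | v != i) y v.

Local Notation c := (y (bc t)).
Local Notation a := (y (bl ord0)).

Lemma eigen_bc :
  rho * c ^+ 2 = y (br ord0) * y (br o1) + \sum_(j < t.+2 | (0 < j)%N) a * y (bl j).
Proof.
rewrite eigen sum_bowtie_link prod_edge_c /edge_c !inE !bowtie_vertex_eqE /= mul1r.
rewrite [X in _ + X]big1 ?addr0 => [|j _]; last by rewrite /edge_r !inE !bowtie_vertex_eqE.
congr (_ + _); apply: eq_bigr => j j_gt0.
by rewrite prod_edge_l // /edge_l !inE !bowtie_vertex_eqE mul1r.
Qed.

Lemma eigen_bl0 : rho * a ^+ 2 = \sum_(j < t.+2 | (0 < j)%N) c * y (bl j).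
Proof.
rewrite eigen sum_bowtie_link /edge_c !inE !bowtie_vertex_eqE /= add0r.
rewrite [X in _ + X]big1 ?addr0 => [|j _]; last by rewrite /edge_r !inE !bowtie_vertex_eqE.
apply: eq_bigr => j j_gt0.
by rewrite prod_edge_l // /edge_l !inE !bowtie_vertex_eqE /= ord_gt0_neq0 // mulr1.
Qed.

Lemma eigen_bl (k : 'I_t.+2) : (0 < k)%N -> rho * y (bl k) ^+ 2 = c * a.
Proof.
move=> k_gt0; rewrite eigen sum_bowtie_link /edge_c !inE !bowtie_vertex_eqE /= add0r.
rewrite [X in _ + X]big1 ?addr0 => [|j _]; last by rewrite /edge_r !inE !bowtie_vertex_eqE.
rewrite (bigD1 k) //= [X in _ + X]big1 ?addr0 => [|j /andP[_ j_neq_k]].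
  rewrite prod_edge_l // /edge_l !inE !bowtie_vertex_eqE /= orbT eq_sym ord_gt0_neq0 //.
  by rewrite mulr1.
by rewrite /edge_l !inE !bowtie_vertex_eqE ord_gt0_neq0 // eq_sym (negbTE j_neq_k).
Qed.

Lemma eigen_br0 :
  rho * y (br ord0) ^+ 2 = c * y (br o1) + \sum_(j < t.+2 | (1 < j)%N) y (br o1) * y (br j).
Proof.
rewrite eigen sum_bowtie_link prod_edge_c /edge_c !inE !bowtie_vertex_eqE /= ord1_neq0.
rewrite big1 ?addr0 => [|j _]; last by rewrite /edge_l !inE !bowtie_vertex_eqE.
rewrite mulr1; congr (_ + _); apply: eq_bigr => j j_gt1.
have j_gt0 := ltnW j_gt1.
by rewrite prod_edge_r // /edge_r !inE !bowtie_vertex_eqE /= ord1_neq0 ord_gt0_neq0 // mul1r.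
Qed.

Lemma eigen_br1 :
  rho * y (br o1) ^+ 2 = c * y (br ord0) + \sum_(j < t.+2 | (1 < j)%N) y (br ord0) * y (br j).
Proof.
rewrite eigen sum_bowtie_link prod_edge_c /edge_c !inE !bowtie_vertex_eqE /= orbT.
rewrite [X in _ + X + _]big1 ?addr0 => [|j _]; last by rewrite /edge_l !inE !bowtie_vertex_eqE.
rewrite eq_sym ord1_neq0 mulr1; congr (_ + _); apply: eq_bigr => j j_gt1.
rewrite prod_edge_r // /edge_r !inE !bowtie_vertex_eqE /= orbT /= eq_sym ord1_neq0.
by rewrite ord_gt1_neq1 // mulr1.
Qed.

Lemma eigen_br (k : 'I_t.+2) : (1 < k)%N -> rho * y (br k) ^+ 2 = y (br ord0) * y (br o1).
Proof.
move=> k_gt1; have k_gt0 := ltnW k_gt1.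
rewrite eigen sum_bowtie_link /edge_c !inE !bowtie_vertex_eqE /= ord_gt0_neq0 // ord_gt1_neq1 // /=.
rewrite add0r big1 ?add0r => [|j _]; last by rewrite /edge_l !inE !bowtie_vertex_eqE.
rewrite (bigD1 k) //= [X in _ + X]big1 ?addr0 => [|j /andP[_ j_neq_k]].
  rewrite prod_edge_r // /edge_r !inE !bowtie_vertex_eqE /= !orbT.
  by rewrite !(eq_sym _ k) ord_gt0_neq0 // ord_gt1_neq1 // mulr1.
by rewrite /edge_r !inE !bowtie_vertex_eqE ord_gt0_neq0 // ord_gt1_neq1 // eq_sym (negbTE j_neq_k).
Qed.

Hypothesis y_gt0 : forall v, 0 < y v.
Local Notation m := (y (bl o1)).
Local Notation r := (y (br ord0)).

Lemma eigenvalue_gt0 : 0 < rho.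
Proof.
have := mulr_gt0 (y_gt0 (bc t)) (y_gt0 (bl ord0)).
by rewrite -(eigen_bl _ ord1_gt0) pmulr_lgt0 // exprn_gt0.
Qed.

Lemma eigen_br0_eq_br1 : r = y (br o1).
Proof.
set S := \sum_(j < t.+2 | (1 < j)%N) y (br j).
have S_ge0 : 0 <= S by apply: sumr_ge0 => j _; exact: ltW.
have : (r - y (br o1)) * (rho * (r + y (br o1)) + c + S) = 0.
  have -> : (r - y (br o1)) * (rho * (r + y (br o1)) + c + S) =
      (rho * r ^+ 2 - (c * y (br o1) + y (br o1) * S))
    - (rho * y (br o1) ^+ 2 - (c * r + r * S)) by ring.
  by rewrite eigen_br0 eigen_br1 -!mulr_sumr !subrr.
move/eqP; rewrite mulf_eq0 subr_eq0 => /orP[/eqP // | /eqP lhs0].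
have : 0 < rho * (r + y (br o1)) + c + S.
  by rewrite ltr_wpDr // ltr_wpDr ?ltW // mulr_gt0 ?eigenvalue_gt0 ?addr_gt0.
by rewrite lhs0 ltxx.
Qed.

Lemma eigen_bl_const (j : 'I_t.+2) : (0 < j)%N -> y (bl j) = m.
Proof.
move=> j_gt0; apply/eqP; rewrite -(eqrXn2 (_ : 0 < 2)%N) ?ltW //.
by apply/eqP/(mulfI (lt0r_neq0 eigenvalue_gt0)); rewrite !eigen_bl // ord1_gt0.
Qed.

Lemma eigen_bc_reduced : rho * c ^+ 2 = r ^+ 2 + a * m * (t%:R + 1).
Proof.
rewrite eigen_bc -eigen_br0_eq_br1 expr2 (eq_bigr (fun=> a * m)) => [|j /eigen_bl_const-> //].
by rewrite sumr_const_ord_gt0 natr1 mulr_natr.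
Qed.

Lemma eigen_bl0_reduced : rho * a ^+ 2 = c * m * (t%:R + 1).
Proof.
rewrite eigen_bl0 (eq_bigr (fun=> c * m)) => [|j /eigen_bl_const-> //].
by rewrite sumr_const_ord_gt0 natr1 mulr_natr.
Qed.

Lemma bowtie_c_lt_r : (c < r) = ((t%:R + 1) ^+ 2 < rho ^+ 2 * (rho - 1)).
Proof.
exact: reduced_c_lt_r eigenvalue_gt0 (y_gt0 _) (y_gt0 _) (y_gt0 _) (eigen_bl _ ord1_gt0)
  eigen_bc_reduced eigen_bl0_reduced (ltW (y_gt0 _)).
Qed.

Lemma bowtie_a_lt_c : (a < c) = ((t%:R + 1) ^+ 2 < rho ^+ 3).
Proof.
exact: reduced_a_lt_c eigenvalue_gt0 (y_gt0 _) (y_gt0 _) (y_gt0 _) (eigen_bl _ ord1_gt0)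
  eigen_bl0_reduced.
Qed.

Lemma bowtie_spectral_rank1 : spectral_rank1 y = [set br ord0; br o1] <-> c < r.
Proof.
rewrite (spectral_rank1_eq_set2 eigen_br0_eq_br1); split=> [max_r | c_lt_r]; first exact: max_r.
have crit := c_lt_r; rewrite bowtie_c_lt_r in crit.
have rho_gt1 : 1 < rho.
  have := lt_trans (exprn_gt0 2 (ltr_pwDr ltr01 (ler0n _ t))) crit.
  by rewrite pmulr_rgt0 ?exprn_gt0 ?eigenvalue_gt0 // subr_gt0.
have a_lt_c : a < c.
  rewrite bowtie_a_lt_c; apply: lt_le_trans crit _.
  by rewrite mulrBr mulr1 -exprSr gerBl exprn_ge0 // ltW ?eigenvalue_gt0.
have ca_lt_r2 : c * a < r ^+ 2.
  by rewrite expr2 ltr_pM ?ltW ?y_gt0 //; apply: lt_trans c_lt_r.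
case=> [[j|j]|] /= w_neq0 w_neq1 //.
- have [j0|j_gt0] := posnP j.
    by rewrite (_ : j = ord0) ?(lt_trans a_lt_c) //; apply: val_inj.
  by apply: ltr_of_scaled_sqr rho_gt1 (y_gt0 _) (ltW (y_gt0 _)) _; rewrite eigen_bl // ltW.
- have j_gt1 : (1 < j)%N.
    move: w_neq0 w_neq1; rewrite !br_eq -!val_eqE /= inordK //.
    by case: (nat_of_ord j) => [|[|]].
  apply: ltr_of_scaled_sqr rho_gt1 (y_gt0 _) (ltW (y_gt0 _)) _.
  by rewrite eigen_br // -eigen_br0_eq_br1 expr2.
Qed.

End EigenEquations.
End BowtieEdges.

Theorem lemma4p1 (R : realType) (t : nat) (rho : R) (y : bowtie_vertex t -> R) :
  (1 <= t)%N ->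
  principal_eigenpair 3 (bowtie_edges t) rho y ->
  (spectral_rank1 y = [set br (@ord0 t.+1); br (inord 1)] <->
   t%:R < rho * Num.sqrt (rho - 1) - 1).
Proof.
(* The argument does not need [1 <= t]. *)
move=> _ [y_gt0 _ eigen].
rewrite (bowtie_spectral_rank1 t eigen y_gt0) (bowtie_c_lt_r t eigen y_gt0) ltrBrDr.
by rewrite ltr_mul_sqrt ?ltW ?(eigenvalue_gt0 t eigen y_gt0) // ltr_pwDr ?ler0n.
Qed.
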